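(* Let $\mathsf{P}=\mathrm{conv}(v_0,\dots,v_r)\subseteq\mathbb{Q}^2$ be a $\mathbb{Q}$-Gorenstein polytope of index $\imath\ge2$. If $\mathsf{P}$ contains two distinct lattice points different from the origin, then $\mathsf{P}$ is not canonical.
   Context: Let $d\ge2$, $r\ge d$ and $v_0:=0,v_1,\dots,v_r\in\mathbb{Q}^d$ pairwise different such that $\mathsf{P}=\mathrm{conv}(v_0,\dots,v_r)$ is full-dimensional with vertex set $\{v_0,\dots,v_r\}$. $\mathsf{P}$ is $\mathbb{Q}$-Gorenstein of index $\imath\in\mathbb{Z}_{\ge1}$ if there exist $\alpha_1,\dots,\alpha_d\in\mathbb{Z}$ with $\sum_{j}\alpha_jv_{ij}=\imath$ for all $i=1,\dots,r$ and $\imath$ is minimal with this property. Such $\mathsf{P}$ is canonical if for every lattice point $0\ne p\in\mathsf{P}$ we have $\sum_j\alpha_jp_j=\imath$. *)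

From HB Require Import structures.
From mathcomp Require Import all_boot all_order all_algebra.
Set Implicit Arguments. Unset Strict Implicit. Unset Printing Implicit Defensive.
Import Order.TTheory GRing.Theory Num.Theory.
Local Open Scope ring_scope.

Definition pairing (d : nat) (alpha : 'rV[int]_d) (x : 'rV[rat]_d) : rat :=
  \sum_(j < d) (alpha 0 j)%:~R * x 0 j.

Definition in_conv (d r : nat) (v : 'I_r.+1 -> 'rV[rat]_d) (x : 'rV[rat]_d) : Prop :=
  exists lam : 'I_r.+1 -> rat,
    (forall i, 0 <= lam i) /\ \sum_i lam i = 1 /\ x = \sum_i lam i *: v i.

Definition is_vertex (d r : nat) (v : 'I_r.+1 -> 'rV[rat]_d) (i : 'I_r.+1) : Prop :=
  ~ exists lam : 'I_r.+1 -> rat,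
      (forall j, 0 <= lam j) /\ lam i = 0 /\ \sum_j lam j = 1 /\
      v i = \sum_j lam j *: v j.

(* conv(v_0,...,v_r) with v_0 = 0 is full-dimensional: its affine hull,
   i.e. the linear span of v_1 - v_0, ..., v_r - v_0 = v_1,...,v_r, is Q^d. *)
Definition full_dim (d r : nat) (v : 'I_r.+1 -> 'rV[rat]_d) : Prop :=
  \rank (\matrix_(i < r.+1) (v i - v ord0)) = d.

Definition good_polytope (d r : nat) (v : 'I_r.+1 -> 'rV[rat]_d) : Prop :=
  (d <= r)%N /\ v ord0 = 0 /\ injective v /\ full_dim v /\ (forall i, is_vertex v i).

Definition gor_witness (d r : nat) (v : 'I_r.+1 -> 'rV[rat]_d)
    (ii : nat) (alpha : 'rV[int]_d) : Prop :=
  forall i : 'I_r.+1, i != ord0 -> pairing alpha (v i) = ii%:R.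

Definition QGorenstein_index (d r : nat) (v : 'I_r.+1 -> 'rV[rat]_d) (ii : nat) : Prop :=
  (0 < ii)%N /\ (exists alpha, gor_witness v ii alpha) /\
  (forall j : nat, (0 < j)%N -> (exists alpha, gor_witness v j alpha) -> (ii <= j)%N).

Definition lattice_point (d : nat) (p : 'rV[rat]_d) : Prop :=
  forall j : 'I_d, p 0 j \is a Num.int.

Definition canonical (d r : nat) (v : 'I_r.+1 -> 'rV[rat]_d) (ii : nat) : Prop :=
  exists alpha, gor_witness v ii alpha /\
    forall p : 'rV[rat]_d, lattice_point p -> in_conv v p -> p != 0 ->
      pairing alpha p = ii%:R.

From HB Require Import structures.
From mathcomp Require Import all_boot all_order all_algebra.
From mathcomp Require Import ring lra zify.
Set Implicit Arguments. Unset Strict Implicit. Unset Printing Implicit Defensive.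
Import Order.TTheory GRing.Theory Num.Theory.
Local Open Scope ring_scope.

(* Let alpha be the functional of a canonical structure,
   so alpha.p = alpha.q = n (n >= 2) for the two lattice points p != q.
   1. Minimality of the index forces alpha to be primitive: dividing alpha by
      g = gcd(alpha_1, alpha_2), which divides n = alpha.p, gives a witness of
      index n/g.  Hence (Bezout) some lattice point e has alpha.e = 1.
   2. In the plane, the lattice vectors killed by alpha are the integer
      multiples of u = (-alpha_2, alpha_1); so q = p + k u with k a nonzero
      integer, and after changing e by a multiple of u, p = n e + t u with
      0 <= t < n.
   3. The lattice point z = p - e satisfies alpha.z = n - 1 and, as
      t <= (n - 1) k, lies in the triangle conv(0, p, q), hence in P.
   Since z != 0 and alpha.z != n, P is not canonical. *)

Lemma pairingD (d : nat) (a : 'rV[int]_d) (x y : 'rV[rat]_d) :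
  pairing a (x + y) = pairing a x + pairing a y.
Proof. by rewrite /pairing -big_split; apply: eq_bigr => j _; rewrite !mxE mulrDr. Qed.

Lemma pairingZ (d : nat) (a : 'rV[int]_d) (c : rat) (x : 'rV[rat]_d) :
  pairing a (c *: x) = c * pairing a x.
Proof. by rewrite /pairing mulr_sumr; apply: eq_bigr => j _; rewrite !mxE mulrCA. Qed.

Lemma pairing0 (d : nat) (a : 'rV[int]_d) : pairing a 0 = 0.
Proof. by rewrite /pairing big1 // => j _; rewrite mxE mulr0. Qed.

Lemma pairingB (d : nat) (a : 'rV[int]_d) (x y : 'rV[rat]_d) :
  pairing a (x - y) = pairing a x - pairing a y.
Proof. by rewrite -scaleN1r pairingD pairingZ mulN1r. Qed.

Lemma lattice_pointD (d : nat) (p q : 'rV[rat]_d) :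
  lattice_point p -> lattice_point q -> lattice_point (p + q).
Proof. by move=> lp lq j; rewrite mxE rpredD. Qed.

Lemma lattice_pointB (d : nat) (p q : 'rV[rat]_d) :
  lattice_point p -> lattice_point q -> lattice_point (p - q).
Proof. by move=> lp lq j; rewrite !mxE rpredB. Qed.

Lemma lattice_pointZ (d : nat) (c : rat) (p : 'rV[rat]_d) :
  c \is a Num.int -> lattice_point p -> lattice_point (c *: p).
Proof. by move=> ci lp j; rewrite mxE rpredM. Qed.

Definition in_triangle (d : nat) (z p q : 'rV[rat]_d) : Prop :=
  exists l m : rat, [/\ 0 <= l, 0 <= m, l + m <= 1 & z = l *: p + m *: q].

Lemma in_triangle_sym (d : nat) (z p q : 'rV[rat]_d) :
  in_triangle z p q -> in_triangle z q p.
Proof. by move=> [l [m [l0 m0 lm ->]]]; exists m, l; split; rewrite // addrC. Qed.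

(* Since the origin v_0 is a vertex, P contains the triangle spanned by 0 and
   any two of its points: the missing weight 1 - l - m goes to v_0. *)
Lemma in_conv_triangle (d r : nat) (v : 'I_r.+1 -> 'rV[rat]_d) (p q z : 'rV[rat]_d) :
  v ord0 = 0 -> in_conv v p -> in_conv v q -> in_triangle z p q -> in_conv v z.
Proof.
move=> v0 [mu [mu0 [mu1 ->]]] [nu [nu0 [nu1 ->]]] [a [b [a0 b0 ab ->]]].
pose rest (i : 'I_r.+1) : rat := if i == ord0 then 1 - a - b else 0.
exists (fun i => a * mu i + b * nu i + rest i); split; [|split].
- move=> i; rewrite /rest; case: eqP => _; last by rewrite addr0 addr_ge0 ?mulr_ge0.
  by apply: addr_ge0; [rewrite addr_ge0 ?mulr_ge0 | lra].
- rewrite !big_split /= -!mulr_sumr mu1 nu1 (bigD1 ord0) //= big1 /rest ?eqxx.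
    by ring.
  by move=> i /negbTE ->.
- have rest0 : \sum_i rest i *: v i = 0.
    rewrite (bigD1 ord0) //= v0 scaler0 add0r big1 // => i /negbTE hi.
    by rewrite /rest hi scale0r.
  under [RHS]eq_bigr do rewrite !scalerDl -!scalerA.
  by rewrite !big_split /= rest0 addr0 -!scaler_sumr.
Qed.

Lemma witness_div (d r : nat) (v : 'I_r.+1 -> 'rV[rat]_d) (m g : nat) (al : 'rV[int]_d) :
  (0 < g)%N -> (forall j, (g%:Z %| al 0%R j)%Z) -> gor_witness v (m * g) al ->
  gor_witness v m (\row_j divz (al 0%R j) g%:Z).
Proof.
move=> g0 dvd hw i i0.
have gR : g%:R != 0 :> rat by rewrite pnatr_eq0 -lt0n.
apply: (mulIf gR); rewrite -natrM -(hw i i0) /pairing mulr_suml.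
apply: eq_bigr => j _; rewrite mxE mulrAC.
by have -> : g%:R = (g%:Z)%:~R :> rat by []; rewrite -intrM divzK.
Qed.

Lemma ord2_cases (j : 'I_2) : j = 0 \/ j = 1.
Proof. by case: j => [[|[|m]] hm] //; [left|right]; apply: val_inj. Qed.

Lemma pairing2 (a : 'rV[int]_2) (x : 'rV[rat]_2) :
  pairing a x = (a 0 0)%:~R * x 0 0 + (a 0 1)%:~R * x 0 1.
Proof.
rewrite /pairing big_ord_recr big_ord_recr big_ord0 /= add0r.
have -> : widen_ord (leqnSn 1) (ord_max : 'I_1) = 0 :> 'I_2 by apply: val_inj.
by have -> : (ord_max : 'I_2) = 1 by apply: val_inj.
Qed.

Definition perp (a : 'rV[int]_2) : 'rV[rat]_2 :=
  \row_j (if j == 0 then - (a 0 1)%:~R else (a 0 0)%:~R).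

Lemma lattice_perp (a : 'rV[int]_2) : lattice_point (perp a).
Proof. by move=> j; rewrite mxE; case: ifP => _; rewrite ?rpredN rpred_int. Qed.

Lemma pairing_perp (a : 'rV[int]_2) : pairing a (perp a) = 0.
Proof. by rewrite pairing2 !mxE /=; ring. Qed.

Definition det2 (e w : 'rV[rat]_2) : rat := e 0 0 * w 0 1 - e 0 1 * w 0 0.

Lemma lattice_det2 (e w : 'rV[rat]_2) :
  lattice_point e -> lattice_point w -> det2 e w \is a Num.int.
Proof. by move=> le lw; rewrite rpredB ?rpredM. Qed.

Section UnitLevelPoint.

Variables (a : 'rV[int]_2) (e : 'rV[rat]_2).
Hypotheses (le : lattice_point e) (he : pairing a e = 1).

(* Every vector killed by a is a multiple of u, the coefficient being the
   determinant with e; for lattice vectors it is thus an integer. *)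
Lemma kernel_perp (w : 'rV[rat]_2) : pairing a w = 0 -> w = det2 e w *: perp a.
Proof.
move: he; rewrite !pairing2 /det2 => he1 hw; apply/rowP => j.
case: (ord2_cases j) => ->; rewrite !mxE /=.
- transitivity (w 0 0 * ((a 0 0)%:~R * e 0 0 + (a 0 1)%:~R * e 0 1)
                - e 0 0 * ((a 0 0)%:~R * w 0 0 + (a 0 1)%:~R * w 0 1)).
    by rewrite he1 hw; ring.
  by ring.
- transitivity (w 0 1 * ((a 0 0)%:~R * e 0 0 + (a 0 1)%:~R * e 0 1)
                - e 0 1 * ((a 0 0)%:~R * w 0 0 + (a 0 1)%:~R * w 0 1)).
    by rewrite he1 hw; ring.
  by ring.
Qed.

(* A lattice point p at level n is n e' + t u for a unit-level lattice point
   e' and a remainder 0 <= t < n: write p - n e = c u and divide c by n. *)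
Lemma reduce_unit_vector (p : 'rV[rat]_2) (n : nat) :
  (0 < n)%N -> lattice_point p -> pairing a p = n%:R ->
  exists (e' : 'rV[rat]_2) (t : int), [/\ lattice_point e', pairing a e' = 1,
    0 <= t < n%:Z & p = n%:R *: e' + t%:~R *: perp a].
Proof.
move=> n0 lp hp.
have hw : pairing a (p - n%:R *: e) = 0 by rewrite pairingB pairingZ he hp mulr1 subrr.
have lw : lattice_point (p - n%:R *: e).
  by apply: lattice_pointB lp (lattice_pointZ _ le); rewrite rpred_nat.
have /intrP [c hc] := lattice_det2 le lw.
have ew := kernel_perp hw; rewrite hc in ew.
exists (e + (c %/ n)%Z%:~R *: perp a), (c %% n)%Z; split.
- by apply: lattice_pointD le (lattice_pointZ _ (lattice_perp a)); rewrite rpred_int.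
- by rewrite pairingD pairingZ pairing_perp mulr0 addr0.
- by rewrite modz_ge0 ?ltz_pmod //; lia.
- rewrite scalerDr scalerA -addrA -scalerDl.
  have -> : n%:R * (c %/ n)%Z%:~R + (c %% n)%Z%:~R = c%:~R :> rat.
    by rewrite [in RHS](divz_eq c n) [in RHS]intrD intrM mulrC.
  by rewrite -ew addrC subrK.
Qed.

(* Key step, for q = p + k u with k >= 1: with p = n e' + t u as above,
   z = p - e' = ((n-1)/n - t/(nk)) p + t/(nk) q is a lattice point of
   level n - 1 in conv(0, p, q); the weights are nonnegative because
   t <= n - 1 <= (n - 1) k. *)
Lemma lower_level_point_dir (p : 'rV[rat]_2) (n : nat) (k : rat) :
  (0 < n)%N -> lattice_point p -> pairing a p = n%:R -> 1 <= k ->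
  exists z, [/\ lattice_point z, pairing a z = n%:R - 1 &
                in_triangle z p (p + k *: perp a)].
Proof.
move=> n0 lp hp k1.
have [e' [t [le' he' /andP [t0 tn] ep]]] := reduce_unit_vector n0 lp hp.
have n0' : 0 < n%:R :> rat by rewrite ltr0n.
have t0' : 0 <= t%:~R :> rat by rewrite ler0z.
have tn' : t%:~R + 1 <= n%:R :> rat.
  have : t + 1 <= n%:Z by lia.
  by rewrite -(ler_int rat) intrD.
exists (p - e'); split; first exact: lattice_pointB.
  by rewrite pairingB hp he'.
pose m := t%:~R / (n%:R * k).
exists ((n%:R - 1) / n%:R - m), m; split.
- have -> : (n%:R - 1) / n%:R - m = ((n%:R - 1) * k - t%:~R) / (n%:R * k).
    by rewrite /m; field; rewrite !gt_eqF //; lra.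
  by rewrite divr_ge0 ?mulr_ge0; nra.
- by rewrite divr_ge0 ?mulr_ge0; lra.
- by rewrite subrK ler_pdivrMr // mul1r; lra.
- rewrite ep; apply/rowP => j; rewrite !mxE /m.
  by field; rewrite !gt_eqF //; lra.
Qed.

(* Two distinct lattice points p, q at level n >= 1: q - p = k u with k a
   nonzero integer, and the previous lemma applies to (p, q) if k > 0 and to
   (q, p) if k < 0. *)
Lemma lower_level_point (p q : 'rV[rat]_2) (n : nat) :
  (0 < n)%N -> lattice_point p -> lattice_point q ->
  pairing a p = n%:R -> pairing a q = n%:R -> p != q ->
  exists z, [/\ lattice_point z, pairing a z = n%:R - 1 & in_triangle z p q].
Proof.
move=> n0 lp lq hp hq pq.
have hqp : pairing a (q - p) = 0 by rewrite pairingB hp hq subrr.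
have /intrP [k hk] := lattice_det2 le (lattice_pointB lq lp).
have eqp := kernel_perp hqp; rewrite hk in eqp.
case: (ltgtP k 0) => k0.
- have -> : p = q + (- k)%:~R *: perp a by rewrite intrN scaleNr -eqp opprB addrC subrK.
  have [|z [lz hz /in_triangle_sym tz]] := lower_level_point_dir n0 lq hq (k := (- k)%:~R).
    by rewrite ler1z; lia.
  by exists z.
- have -> : q = p + k%:~R *: perp a by rewrite -eqp addrC subrK.
  by apply: lower_level_point_dir n0 lp hp _; rewrite ler1z; lia.
- by move: pq; rewrite -subr_eq0 -oppr_eq0 opprB eqp k0 scale0r eqxx.
Qed.

End UnitLevelPoint.

Lemma gcd_dvd_level (a : 'rV[int]_2) (p : 'rV[rat]_2) (n : nat) :
  lattice_point p -> pairing a p = n%:R -> (gcdz (a 0%R 0%R) (a 0%R 1%R) %| n%:Z)%Z.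
Proof.
move=> lp hp; have /intrP [p0 e0] := lp 0; have /intrP [p1 e1] := lp 1.
have -> : n%:Z = a 0 0 * p0 + a 0 1 * p1.
  by apply: (@intr_inj rat); rewrite intrD !intrM -e0 -e1 -pairing2 hp.
by rewrite rpredD // dvdz_mulr ?dvdz_gcdl ?dvdz_gcdr.
Qed.

(* Minimality of the index: a witness reaching the level ii at some lattice
   point is primitive, since otherwise dividing it by the gcd g > 1 would
   give a witness of the smaller index ii / g. *)
Lemma primitive_witness (r : nat) (v : 'I_r.+1 -> 'rV[rat]_2) (ii : nat)
    (al : 'rV[int]_2) (p : 'rV[rat]_2) :
  QGorenstein_index v ii -> gor_witness v ii al ->
  lattice_point p -> pairing al p = ii%:R -> gcdz (al 0 0) (al 0 1) = 1.
Proof.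
move=> [ii0 [_ imin]] hw lp hp.
have := gcd_dvd_level lp hp; rewrite /gcdz; set g := gcdn _ _ => gii.
have {}gii : (g %| ii)%N by exact: gii.
have g0 : (0 < g)%N by rewrite lt0n; apply: contraTneq gii => ->; rewrite dvd0n; lia.
have : (ii <= ii %/ g)%N.
  apply: imin; first by rewrite divn_gt0 // dvdn_leq.
  exists (\row_j divz (al 0%R j) g%:Z); apply: witness_div => //; last by rewrite divnK.
  by move=> j; case: (ord2_cases j) => ->; [apply: dvdz_gcdl | apply: dvdz_gcdr].
case: (ltngtP g 1) => [g1|g1|-> //]; first lia.
by have := ltn_Pdiv g1 ii0; lia.
Qed.

Lemma bezout_vector (a : 'rV[int]_2) :
  gcdz (a 0 0) (a 0 1) = 1 -> exists e, lattice_point e /\ pairing a e = 1.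
Proof.
move=> g1; have [x [y hxy]] := Bezoutz (a 0 0) (a 0 1).
exists (\row_j (if j == 0 then x else y)%:~R); split.
  by move=> j; rewrite mxE rpred_int.
by rewrite pairing2 !mxE /= -!intrM -intrD mulrC [a 0 1 * _]mulrC hxy g1.
Qed.

Theorem mainTheorem6 (r : nat) (v : 'I_r.+1 -> 'rV[rat]_2) (ii : nat) :
  good_polytope v ->
  QGorenstein_index v ii ->
  (2 <= ii)%N ->
  (exists p q : 'rV[rat]_2,
      [/\ lattice_point p /\ lattice_point q, in_conv v p /\ in_conv v q,
          p != 0, q != 0 & p != q]) ->
  ~ canonical v ii.
Proof.
move=> [_ [v0 _]] hgor ii2 [p [q [[lp lq] [cp cq] p0 q0 pq]]] [al [hw hcan]].
have hp := hcan p lp cp p0; have hq := hcan q lq cq q0.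
have [e [le he]] := bezout_vector (primitive_witness hgor hw lp hp).
have [z [lz hz tz]] := lower_level_point le he (ltnW ii2) lp lq hp hq pq.
have ii2R : 2 <= ii%:R :> rat by rewrite ler_nat.
have z0 : z != 0 by apply/eqP => z0; move: hz; rewrite z0 pairing0; lra.
by have := hcan z lz (in_conv_triangle v0 cp cq tz) z0; rewrite hz; lra.
Qed.
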